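(* Let $\widetilde{\Sigma}_1,\ldots,\widetilde{\Sigma}_n$ be pairwise disjoint visibly pushdown alphabets and $\widetilde{\Sigma}=\widetilde{\Sigma}_1\uplus\cdots\uplus\widetilde{\Sigma}_n$. If $L_i\subseteq\widetilde{\Sigma}_i^*$ is a visibly pushdown language for each $i$, then the well-nested shuffle $L_1\bowtie\cdots\bowtie L_n$ is a visibly pushdown language over $\widetilde{\Sigma}$.
   Context: A visibly pushdown (VP) alphabet is a finite alphabet partitioned into calls, returns and internals; $\widetilde{\Sigma}$ has as calls/returns/internals the unions of those of the $\widetilde{\Sigma}_i$. A visibly pushdown automaton is a pushdown automaton with bottom symbol $\bot$ that pushes one non-$\bot$ symbol on each call, pops the top symbol on each return (reading $\bot$ on empty stack without removing it), and does not touch the stack on internals; a visibly pushdown language is one accepted by such an automaton. In a word, calls and returns are matched like opening and closing parentheses (internals ignored). A word over $\widetilde{\Sigma}$ is well-nested if every matched call–return pair consists of two letters from the same $\widetilde{\Sigma}_k$. The shuffle $L_1\parallel\cdots\parallel L_n$ is $\{w\in\widetilde{\Sigma}^*:\Pi_{\widetilde{\Sigma}_i}(w)\in L_i\text{ for all }i\}$, where $\Pi_{\widetilde{\Sigma}_i}$ erases letters not in $\widetilde{\Sigma}_i$; the well-nested shuffle $L_1\bowtie\cdots\bowtie L_n$ is the set of well-nested words in $L_1\parallel\cdots\parallel L_n$. *)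

From mathcomp Require Import all_boot.
Set Implicit Arguments. Unset Strict Implicit. Unset Printing Implicit Defensive.

(* A visibly pushdown alphabet: a finite type A with a partition of its
   letters into calls, returns and internals, given by [kind : A -> letter_kind]. *)
Inductive letter_kind := Call | Ret | Int.

(* The stack is a [seq G]
   (head = top); the empty stack represents the stack holding only the bottom
   symbol ⊥ (G contains only non-⊥ symbols).
   - dcall q a q' g : on call a in state q, go to q' and push g;
   - dret q a top q' : on return a in state q with top of stack [top]
     ([None] = ⊥, in which case nothing is popped), go to q' (and pop);
   - dint q a q' : on internal a, go to q', stack untouched. *)
Record VPA (A : Type) := {
  vQ : finType;
  vG : finType;
  vinit : pred vQ;
  vfinal : pred vQ;
  vcall : vQ -> A -> vQ -> vG -> bool;
  vret : vQ -> A -> option vG -> vQ -> bool;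
  vint : vQ -> A -> vQ -> bool }.

Section VPA_semantics.
Variables (A : Type) (kind : A -> letter_kind) (M : VPA A).

Definition vstep (q : vQ M) (st : seq (vG M)) (a : A)
    (q' : vQ M) (st' : seq (vG M)) : Prop :=
  match kind a with
  | Call => exists g, st' = g :: st /\ vcall q a q' g
  | Ret => match st with
           | [::] => st' = [::] /\ vret q a None q'
           | g :: s => st' = s /\ vret q a (Some g) q'
           end
  | Int => st' = st /\ vint q a q'
  end.

Inductive vrun : vQ M -> seq (vG M) -> seq A -> vQ M -> seq (vG M) -> Prop :=
  | vrun_nil q st : vrun q st [::] q st
  | vrun_cons q st a w q1 st1 q2 st2 :
      vstep q st a q1 st1 -> vrun q1 st1 w q2 st2 -> vrun q st (a :: w) q2 st2.

Definition vaccepts (w : seq A) : Prop :=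
  exists (q0 qf : vQ M) (st : seq (vG M)), @vinit A M q0 /\ vrun q0 [::] w qf st /\ @vfinal A M qf.
End VPA_semantics.

Definition is_VPL (A : Type) (kind : A -> letter_kind) (L : seq A -> Prop) : Prop :=
  exists M : VPA A, forall w, L w <-> vaccepts kind M w.

(* The combined alphabet Σ̃ is [Sigma] with [kind]; [comp a = k] says that the
   letter a belongs to the k-th sub-alphabet Σ̃_k (so the Σ̃_k are pairwise
   disjoint and their union is Σ̃). *)
Section Shuffle.
Variables (n : nat) (Sigma : finType) (kind : Sigma -> letter_kind)
  (comp : Sigma -> 'I_n).

Definition subalph (i : 'I_n) : Type := {a : Sigma | comp a == i}.

Definition sub_kind (i : 'I_n) (a : subalph i) : letter_kind := kind (sval a).

Definition proj (i : 'I_n) (w : seq Sigma) : seq (subalph i) :=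
  pmap (fun a : Sigma => match comp a =P i with
                         | ReflectT e => Some (exist _ a (introT eqP e))
                         | ReflectF _ => None end) w.

(* Well-nestedness: calls and returns are matched like parentheses (with a
   stack of pending calls); each matched call/return pair must be in the same
   sub-alphabet. Unmatched returns (empty stack) and pending calls are allowed. *)
Fixpoint wn_aux (st : seq Sigma) (w : seq Sigma) : bool :=
  match w with
  | [::] => true
  | a :: w' =>
      match kind a with
      | Call => wn_aux (a :: st) w'
      | Ret => match st with
               | [::] => wn_aux [::] w'
               | c :: st' => (comp c == comp a) && wn_aux st' w'
               end
      | Int => wn_aux st w'
      end
  end.

Definition well_nested (w : seq Sigma) : bool := wn_aux [::] w.

Definition shuffle (L : forall i : 'I_n, seq (subalph i) -> Prop) (w : seq Sigma) : Prop :=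
  forall i : 'I_n, L i (proj i w).

Definition wn_shuffle (L : forall i : 'I_n, seq (subalph i) -> Prop) (w : seq Sigma) : Prop :=
  well_nested w /\ shuffle L w.
End Shuffle.

From mathcomp Require Import all_boot.

(* The product of the component automata runs each letter on the automaton of
   its own sub-alphabet, and pushes stack symbols tagged with the component
   that pushed them. A return may only pop a symbol of its own component, which
   is exactly well-nestedness; under this discipline the symbols of component i
   on the product stack form the stack of the i-th automaton, so the product
   accepts a word iff it is well nested and every projection is accepted. *)

Set Implicit Arguments. Unset Strict Implicit. Unset Printing Implicit Defensive.

Section RunInversion.
Variables (A : Type) (kd : A -> letter_kind) (N : VPA A).

Lemma vrun_nilE (q q' : vQ N) (st st' : seq (vG N)) :
  vrun kd q st [::] q' st' -> q' = q /\ st' = st.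
Proof. by move=> R; inversion R. Qed.

Lemma vrun_consE (q q2 : vQ N) (st st2 : seq (vG N)) a w :
  vrun kd q st (a :: w) q2 st2 ->
  exists q1 st1, vstep kd q st a q1 st1 /\ vrun kd q1 st1 w q2 st2.
Proof. by move=> R; inversion R; subst; do 2 eexists; split; eauto. Qed.

End RunInversion.

Section WellNestedProduct.
Variables (n : nat) (Sigma : finType) (kind : Sigma -> letter_kind)
  (comp : Sigma -> 'I_n).

Definition sub_letter (a : Sigma) : subalph comp (comp a) := exist _ a (eqxx _).

Lemma proj_cons_comp a w :
  proj comp (comp a) (a :: w) = sub_letter a :: proj comp (comp a) w.
Proof.
(* [eqP] also occurs in the proof term under the match: generalize it first so
   that the case analysis on [comp a =P comp a] is well typed. *)
rewrite /proj /=; move: (introT (P := comp a = comp a) eqP) => toP.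
by case: eqP => // e; congr (_ :: _); apply: val_inj.
Qed.

Lemma proj_cons_other i a w : comp a != i -> proj comp i (a :: w) = proj comp i w.
Proof. by rewrite /proj /=; move: (introT (P := comp a = i) eqP) => toP; case: eqP. Qed.

Variable M : forall i : 'I_n, VPA (subalph comp i).

Local Notation ckind i := (@sub_kind n Sigma kind comp i).
Local Notation psym g := (Tagged (fun j => vG (M j)) g).

Definition prod_state : finType := {dffun forall i : 'I_n, vQ (M i)}.
Definition prod_sym : finType := {i : 'I_n & vG (M i)}.

Definition sym_at (i : 'I_n) (G : prod_sym) : option (vG (M i)) := untag None Some G.

Definition stack_at (i : 'I_n) (ST : seq prod_sym) : seq (vG (M i)) :=
  pmap (sym_at i) ST.
Arguments stack_at : simpl never.

Lemma sym_at_Some i G g : sym_at i G = Some g -> G = psym g.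
Proof. by case: G => j h; rewrite /sym_at /untag /=; case: eqP => // e; subst j => -[->]. Qed.

Lemma sym_at_tag i g : sym_at i (psym g) = Some g.
Proof. by rewrite /sym_at /untag /=; case: eqP => // e; rewrite eq_axiomK. Qed.

Lemma stack_at_cons_tag i g ST :
  stack_at i (psym g :: ST) = g :: stack_at i ST.
Proof. by rewrite /stack_at /= sym_at_tag. Qed.

Lemma stack_at_cons_other i G ST : tag G != i -> stack_at i (G :: ST) = stack_at i ST.
Proof. by move=> ne; rewrite /stack_at /= /sym_at untag_dflt. Qed.

Definition others_fixed (k : 'I_n) (Q Q' : prod_state) : bool :=
  [forall j, (j != k) ==> (Q' j == Q j)].

Lemma others_fixed_eq k Q Q' j : others_fixed k Q Q' -> k != j -> Q' j = Q j.
Proof. by move=> /forallP /(_ j) /implyP H ne; apply/eqP/H; rewrite eq_sym. Qed.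

Definition set_state (Q : prod_state) (k : 'I_n) (q : vQ (M k)) : prod_state :=
  finfun (dfwith Q q).

Lemma set_state_in Q k (q : vQ (M k)) : set_state Q q k = q.
Proof. by rewrite ffunE dfwith_in. Qed.

Lemma set_state_out Q k (q : vQ (M k)) j : k != j -> set_state Q q j = Q j.
Proof. by move=> ne; rewrite ffunE dfwith_out. Qed.

Lemma others_fixed_set Q k (q : vQ (M k)) : others_fixed k Q (set_state Q q).
Proof. by apply/forallP => j; apply/implyP => ne; rewrite set_state_out // eq_sym. Qed.

Definition prod_call (Q : prod_state) (a : Sigma) (Q' : prod_state) (G : prod_sym) :=
  if sym_at (comp a) G is Some g then
    vcall (Q (comp a)) (sub_letter a) (Q' (comp a)) g && others_fixed (comp a) Q Q'
  else false.

Definition prod_ret (Q : prod_state) (a : Sigma) (oG : option prod_sym) (Q' : prod_state) :=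
  match oG with
  | None => vret (Q (comp a)) (sub_letter a) None (Q' (comp a)) && others_fixed (comp a) Q Q'
  | Some G =>
      if sym_at (comp a) G is Some g then
        vret (Q (comp a)) (sub_letter a) (Some g) (Q' (comp a)) && others_fixed (comp a) Q Q'
      else false
  end.

Definition prod_int (Q : prod_state) (a : Sigma) (Q' : prod_state) :=
  vint (Q (comp a)) (sub_letter a) (Q' (comp a)) && others_fixed (comp a) Q Q'.

Definition prod_vpa : VPA Sigma := {|
  vQ := prod_state; vG := prod_sym;
  vinit := fun Q => [forall i, vinit (Q i)];
  vfinal := fun Q => [forall i, vfinal (Q i)];
  vcall := prod_call; vret := prod_ret; vint := prod_int |}.

(* [st] is the stack of pending calls maintained by [wn_aux]; the invariant
   [map comp st = map tag ST] says it carries the same component tags as the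
   product stack [ST]. *)
Lemma prod_step_proj Q ST a Q1 ST1 st w :
  map comp st = map tag ST -> vstep kind (M := prod_vpa) Q ST a Q1 ST1 ->
  exists2 st1, map comp st1 = map tag ST1 &
    [/\ wn_aux kind comp st1 w -> wn_aux kind comp st (a :: w),
        others_fixed (comp a) Q Q1,
        forall i, comp a != i -> stack_at i ST1 = stack_at i ST &
        vstep (ckind (comp a)) (Q (comp a)) (stack_at (comp a) ST) (sub_letter a)
          (Q1 (comp a)) (stack_at (comp a) ST1)].
Proof.
move=> tags; rewrite /vstep /sub_kind /=; case: (kind a) => /=.
- case=> G [-> /=]; rewrite /prod_call.
  case E: (sym_at _ G) => [g|//] /andP[call fixed]; rewrite (sym_at_Some E).
  exists (a :: st); first by rewrite /= tags.
  split=> // [i ne|]; first by rewrite stack_at_cons_other.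
  by exists g; rewrite stack_at_cons_tag.
- case: ST tags => [|G ST] tags [-> /=].
    case: st tags => // _ /andP[ret fixed].
    by exists [::]; split.
  case E: (sym_at _ G) => [g|//] /andP[ret fixed]; move: tags.
  rewrite (sym_at_Some E); case: st => // c st [/= c_a tags].
  exists st => //; split=> // [|i ne|].
  + by rewrite c_a eqxx.
  + by rewrite stack_at_cons_other.
  + by rewrite stack_at_cons_tag.
- by case=> -> /andP[int fixed]; exists st.
Qed.

Lemma prod_step_lift (Q : prod_state) ST a q1 s1 st w :
  map comp st = map tag ST -> wn_aux kind comp st (a :: w) ->
  vstep (ckind (comp a)) (Q (comp a)) (stack_at (comp a) ST) (sub_letter a) q1 s1 ->
  exists ST1, exists2 st1, map comp st1 = map tag ST1 &
    [/\ wn_aux kind comp st1 w, stack_at (comp a) ST1 = s1,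
        forall i, comp a != i -> stack_at i ST1 = stack_at i ST &
        vstep kind (M := prod_vpa) Q ST a (set_state Q q1) ST1].
Proof.
move=> tags; rewrite /vstep /sub_kind /= /prod_call /prod_int.
rewrite set_state_in others_fixed_set; case: (kind a) => wn.
- case=> g [-> call]; exists (psym g :: ST), (a :: st); first by rewrite /= tags.
  split=> // [|i ne|]; first by rewrite stack_at_cons_tag.
    by rewrite stack_at_cons_other.
  by exists (psym g); rewrite sym_at_tag andbT.
- case: ST tags => [|[j g] ST] tags.
    case: st tags wn => // _ wn [-> ret].
    by exists [::], [::]; rewrite ?andbT.
  case: st tags wn => // c st [/= c_j tags] /andP[/eqP c_a wn].
  move: g; rewrite -c_j c_a => g; rewrite stack_at_cons_tag => -[-> ret].
  exists ST, st => //; split=> // [i ne|]; first by rewrite stack_at_cons_other.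
  by rewrite sym_at_tag andbT.
- by case=> -> int; exists ST, st; rewrite ?andbT.
Qed.

Lemma prod_run_proj Q ST w Q' ST' st :
  vrun kind (M := prod_vpa) Q ST w Q' ST' -> map comp st = map tag ST ->
  wn_aux kind comp st w /\
  forall i, vrun (ckind i) (Q i) (stack_at i ST) (proj comp i w) (Q' i) (stack_at i ST').
Proof.
move=> R; elim: R st => {Q ST w Q' ST'} [Q ST | Q ST a w Q1 ST1 Q2 ST2 step _ IH] st tags.
  by split=> // i; apply: vrun_nil.
have [st1 tags1 [wn1 fixed other cstep]] := prod_step_proj w tags step.
have [wn runs] := IH st1 tags1; split=> [|i]; first exact: wn1.
have [<-|ne] := eqVneq (comp a) i.
  by rewrite proj_cons_comp; apply: vrun_cons cstep (runs _).
by rewrite proj_cons_other // -other // -(others_fixed_eq fixed ne).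
Qed.

Lemma prod_run_lift (Q Q' : prod_state) ST w st :
  map comp st = map tag ST -> wn_aux kind comp st w ->
  (forall i, exists s, vrun (ckind i) (Q i) (stack_at i ST) (proj comp i w) (Q' i) s) ->
  exists ST', vrun kind (M := prod_vpa) Q ST w Q' ST'.
Proof.
elim: w Q ST st => [|a w IH] Q ST st tags wn runs.
  suff -> : Q' = Q by exists ST; apply: vrun_nil.
  by apply/ffunP => i; have [s /vrun_nilE[]] := runs i.
have [s] := runs (comp a); rewrite proj_cons_comp => run_a.
have [q1 [s1 [cstep crun]]] := vrun_consE run_a.
have [ST1 [st1 tags1 [wn1 top1 other step]]] := prod_step_lift tags wn cstep.
have runs1 i : exists s, vrun (ckind i) (set_state Q q1 i) (stack_at i ST1)
    (proj comp i w) (Q' i) s.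
  have [<-|ne] := eqVneq (comp a) i; first by exists s; rewrite set_state_in top1.
  have [s' run] := runs i; exists s'.
  by rewrite set_state_out // other // -(proj_cons_other _ ne).
have [ST' run] := IH _ _ _ tags1 wn1 runs1.
by exists ST'; apply: vrun_cons step run.
Qed.

Lemma prod_accepts w :
  vaccepts kind prod_vpa w <->
  well_nested kind comp w /\ forall i, vaccepts (ckind i) (M i) (proj comp i w).
Proof.
split=> [[Q0 [Qf [ST [/forallP init [run /forallP final]]]]] | [wn acc]].
  have [wn runs] := prod_run_proj (st := [::]) run erefl.
  by split=> // i; exists (Q0 i), (Qf i), (stack_at i ST).
have /fin_all_exists [q0f ok] : forall i, exists q : vQ (M i) * vQ (M i),
    [/\ vinit q.1, exists s, vrun (ckind i) q.1 [::] (proj comp i w) q.2 s & vfinal q.2].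
  by move=> i; have [q0 [qf [s [? [? ?]]]]] := acc i; exists (q0, qf); split=> //; exists s.
pose Q0 : prod_state := finfun (fun i => (q0f i).1).
pose Qf : prod_state := finfun (fun i => (q0f i).2).
have [ST run] : exists ST, vrun kind (M := prod_vpa) Q0 [::] w Qf ST.
  by apply: (prod_run_lift (st := [::])) => // i; rewrite !ffunE; case: (ok i).
exists Q0, Qf, ST; split; first by apply/forallP => i; rewrite ffunE; case: (ok i).
by split=> //; apply/forallP => i; rewrite ffunE; case: (ok i).
Qed.

End WellNestedProduct.

Theorem theorem4p2 (n : nat) (Sigma : finType) (kind : Sigma -> letter_kind)
    (comp : Sigma -> 'I_n)
    (L : forall i : 'I_n, seq (subalph comp i) -> Prop) :
  (forall i : 'I_n, is_VPL (sub_kind kind (comp:=comp) (i:=i)) (L i)) ->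
  is_VPL kind (wn_shuffle kind L).
Proof.
move=> /fin_all_exists [M accM]; exists (prod_vpa M) => w.
split=> [[wn sh] | /prod_accepts[wn acc]]; last by split=> // i; apply/accM.
by apply/prod_accepts; split=> // i; apply/accM.
Qed.
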